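(* Let $w\in\{a,\alpha\}^*$ be such that $\varphi_w$ is primitive, let $\mathbf{u}$ be a fixed point of $\varphi_w$, and let $p\neq\varepsilon$ be a prefix of $\mathbf{u}$. Then the derived word $\mathbf{d}_{\mathbf{u}}(p)$ is fixed by a substitution from $C(F(w))\cup C(H(w))$, where $C(x) = \{\varphi_v : v=\mathrm{cyc}^k(x),\ k\in\mathbb{N}\}$.
   Context: Morphisms on $\{0,1\}^*$: $\varphi_a: 0\mapsto 0, 1 \mapsto 10$; $\varphi_b: 0 \mapsto 0, 1\mapsto 01$; $\varphi_\alpha: 0\mapsto 01, 1\mapsto 1$; $\varphi_\beta: 0\mapsto 10, 1 \mapsto 1$; for $w=w_0\cdots w_{m-1}$, $\varphi_w = \varphi_{w_0}\circ\cdots\circ\varphi_{w_{m-1}}$. $\mathrm{cyc}(u_0u_1\cdots u_{n-1}) = u_1\cdots u_{n-1}u_0$. $H, F$ are monoid morphisms on $\{a,b,\alpha,\beta\}^*$: $H(a)=H(b)=b$, $H(\alpha)=\alpha$, $H(\beta)=\beta$; $F(a)=a$, $F(b)=b$, $F(\alpha)=F(\beta)=\beta$. A morphism is primitive if some power maps every letter to a word containing every letter. Derived word: for a uniformly recurrent word $\mathbf{u}$ and factor $v$, a return word of $v$ is a factor $r$ such that $rv$ is a factor in which $v$ occurs exactly twice (as prefix and suffix); with $r_0,\dots,r_k$ all return words and $\mathbf{u}=p'\,r_{s_0}r_{s_1}\cdots$, $|p'|$ the first occurrence of $v$, $\mathbf{d}_{\mathbf{u}}(v)=s_0s_1\cdots$,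 up to permutation of letters. *)

From mathcomp Require Import all_boot.
Set Implicit Arguments. Unset Strict Implicit. Unset Printing Implicit Defensive.

(* Binary letters: false = 0, true = 1.  Finite words: seq bool.
   Infinite words: nat -> bool. *)

Inductive lett := La | Lb | Lalpha | Lbeta.

Definition phi_letter (l : lett) (x : bool) : seq bool :=
  match l, x with
  | La, false => [:: false]          | La, true => [:: true; false]
  | Lb, false => [:: false]          | Lb, true => [:: false; true]
  | Lalpha, false => [:: false; true] | Lalpha, true => [:: true]
  | Lbeta, false => [:: true; false]  | Lbeta, true => [:: true]
  end.

Definition morph (f : bool -> seq bool) (x : seq bool) : seq bool :=
  flatten (map f x).

Definition phiw (w : seq lett) (x : seq bool) : seq bool :=
  foldr (fun l y => morph (phi_letter l) y) x w.

Definition primitive_w (w : seq lett) : Prop :=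
  exists k, 0 < k /\ forall a b : bool, b \in iter k (phiw w) [:: a].

Definition H_letter (l : lett) : lett :=
  match l with La | Lb => Lb | Lalpha => Lalpha | Lbeta => Lbeta end.
Definition F_letter (l : lett) : lett :=
  match l with La => La | Lb => Lb | Lalpha | Lbeta => Lbeta end.
Definition Hw (w : seq lett) : seq lett := map H_letter w.
Definition Fw (w : seq lett) : seq lett := map F_letter w.

Definition cyc (T : Type) (s : seq T) : seq T :=
  match s with [::] => [::] | x :: s' => rcons s' x end.

Definition in_C (x : seq lett) (f : seq bool -> seq bool) : Prop :=
  exists k, f = phiw (iter k (@cyc lett) x).

Definition in_a_alpha (l : lett) : bool :=
  match l with La | Lalpha => true | _ => false end.

Definition pref (u : nat -> bool) (n : nat) : seq bool := mkseq u n.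

Definition prefix_of (x : seq bool) (u : nat -> bool) : Prop :=
  forall i, i < size x -> nth false x i = u i.

(* u is a fixed point of the (non-erasing) morphism f, i.e. f(u) = u:
   the image of every prefix of u is a prefix of u. *)
Definition is_fixed_point (f : seq bool -> seq bool) (u : nat -> bool) : Prop :=
  forall n, prefix_of (f (pref u n)) u.

Definition occurs_at (u : nat -> bool) (v : seq bool) (i : nat) : Prop :=
  forall j, j < size v -> nth false v j = u (i + j).

Definition factor (u : nat -> bool) (v : seq bool) : Prop :=
  exists i, occurs_at u v i.

Definition occurs_fin (x v : seq bool) (i : nat) : Prop :=
  i + size v <= size x /\ forall j, j < size v -> nth false v j = nth false x (i + j).

Definition return_word (u : nat -> bool) (v r : seq bool) : Prop :=
  factor u (r ++ v) /\ 0 < size r /\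
  forall i, occurs_fin (r ++ v) v i <-> (i = 0 \/ i = size r).

Definition first_occ (u : nat -> bool) (v : seq bool) (i0 : nat) : Prop :=
  occurs_at u v i0 /\ forall j, j < i0 -> ~ occurs_at u v j.

(* d is (a representative, up to permutation of letters, of) the derived
   word d_u(v): r_0, ..., r_k is an enumeration without repetition of all
   return words of v in u, and u = p' r_{d 0} r_{d 1} ... where |p'| is the
   first occurrence of v in u.  Any enumeration is allowed, which is
   exactly the "up to permutation of letters" clause. *)
Definition is_derived_word (u : nat -> bool) (v : seq bool) (d : nat -> nat) : Prop :=
  exists (k : nat) (r : nat -> seq bool),
    (forall i j, i <= k -> j <= k -> r i = r j -> i = j) /\
    (forall x, return_word u v x <-> exists2 i, i <= k & r i = x) /\
    (forall n, d n <= k) /\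
    exists i0, first_occ u v i0 /\
      forall n, prefix_of (pref u i0 ++ flatten [seq r (d j) | j <- iota 0 n]) u.

(* φ_a and φ_α insert a marker letter (0, resp. 1) after every other letter.
   Reading w cyclically, a fixed point u of φ_w unfolds into a chain of words
   V_0 = u, V_j = φ_{e_j}(V_{j+1}), where e_j is the marker of w_{j mod |w|},
   with V_{j+|w|} = V_j.  Desubstituting the prefix p along this chain (a
   leading marker is dropped at the price of conjugating the current coding by
   it) eventually empties it; unwinding the steps shows that the occurrences of
   p in u are exactly the boundaries of a factorisation of u into two blocks
   R_0 <> R_1 read along the shifted word V_j'[1..].  Hence R_0, R_1 are the
   return words of p and V_j'[1..] is the derived word.  Dropping the first
   letter c = u_0 of every V_j conjugates φ_{e_j} into φ_l with l a letter of
   F(w) if c = 0 and of H(w) if c = 1, so by periodicity V_j'[1..] is fixed by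
   φ_v for the cyclic shift v of F(w) or H(w) starting at j'. *)

From mathcomp Require Import all_boot zify.

Lemma morph_cons f b x : morph f (b :: x) = f b ++ morph f x.
Proof. by []. Qed.

Lemma morph_cat f x y : morph f (x ++ y) = morph f x ++ morph f y.
Proof. by rewrite /morph map_cat flatten_cat. Qed.

Lemma morph_rcons f x b : morph f (rcons x b) = morph f x ++ f b.
Proof. by rewrite -cats1 morph_cat /morph /= cats0. Qed.

Lemma eq_morph f g : f =1 g -> morph f =1 morph g.
Proof. by move=> fg x; rewrite /morph (eq_map fg). Qed.

Lemma morph_comp f g x : morph f (morph g x) = morph (fun b => morph f (g b)) x.
Proof. by elim: x => [|b x IH] //; rewrite !morph_cons morph_cat IH. Qed.

Lemma size_morph_leq {f x} : (forall b, 0 < size (f b)) -> size x <= size (morph f x).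
Proof.
move=> f_gt0; elim: x => [|b x IH] //=; rewrite morph_cons size_cat.
by have := f_gt0 b; lia.
Qed.

Lemma morph_belast (e : bool) f x : (forall b, last e (f b) = e) ->
  morph (fun b => belast e (f b)) x ++ [:: e] = e :: morph f x.
Proof.
move=> f_last; elim: x => [|b x IH] //.
by rewrite !morph_cons -catA IH -cat_rcons -{2}(f_last b) -lastI.
Qed.

Lemma phiw_cat ws x y : phiw ws (x ++ y) = phiw ws x ++ phiw ws y.
Proof. by elim: ws => [|l ws IH] //=; rewrite IH morph_cat. Qed.

Lemma size_phiw ws x : size x <= size (phiw ws x).
Proof.
elim: ws => [|l ws IH] //=; apply: leq_trans IH (size_morph_leq _).
by case: l => -[].
Qed.

Lemma phiw_rcons ws l x : phiw (rcons ws l) x = phiw ws (morph (phi_letter l) x).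
Proof. by rewrite /phiw foldr_rcons. Qed.

Lemma seq_ind2 (T : Type) (P : seq T -> Prop) :
  P [::] -> (forall b, P [:: b]) ->
  (forall b b' r, P r -> P (b' :: r) -> P (b :: b' :: r)) -> forall q, P q.
Proof.
move=> P0 P1 P2 q; suff [] : P q /\ forall b, P (b :: q) by [].
by elim: q => [|b' r [Pr Pb'r]]; split=> // b; apply: P2.
Qed.

Lemma mkseqSl (T : Type) (f : nat -> T) n : mkseq f n.+1 = f 0 :: mkseq (fun i => f i.+1) n.
Proof. by rewrite /mkseq /= -[1]addn0 iotaDl -map_comp. Qed.

Lemma iter_cyc {T : Type} (x0 : T) (s : seq T) k :
  iter k (@cyc T) s = mkseq (fun i => nth x0 s ((k + i) %% size s)) (size s).
Proof.
elim: k => [|k IH].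
  by apply: (@eq_from_nth _ x0) => [|i si]; rewrite ?size_mkseq // nth_mkseq // add0n modn_small.
rewrite /= IH; case: (size s) => [|n] //; rewrite mkseqSl mkseqS /=; congr rcons.
  by apply: eq_mkseq => i; rewrite addSnnS.
by rewrite addn0 addSnnS modnDr.
Qed.

Lemma modnSE j n : 0 < n ->
  j.+1 %% n = if (j %% n).+1 == n then 0 else (j %% n).+1.
Proof.
move=> n_gt0; have := ltn_pmod j n_gt0; rewrite -[j.+1]addn1 -modnDml addn1.
by case: eqP => [-> _ | ne jn]; [exact: modnn | rewrite modn_small //; lia].
Qed.

Lemma modnD_surj {n i} j : i < n -> exists k, (j + k) %% n = i.
Proof.
move=> i_lt; exists (i + n - j %% n).
have -> : j + (i + n - j %% n) = (j %/ n).+1 * n + i.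
  by have := ltn_pmod j (leq_ltn_trans (leq0n i) i_lt); have := divn_eq j n; rewrite mulSn; lia.
by rewrite modnMDl modn_small.
Qed.

(** * Infinite words *)

Definition shiftw (v : nat -> bool) : nat -> bool := fun n => v n.+1.

Definition is_image (f : seq bool -> seq bool) (x v : nat -> bool) : Prop :=
  forall m, prefix_of (f (pref x m)) v.

Lemma size_pref (v : nat -> bool) n : size (pref v n) = n.
Proof. exact: size_mkseq. Qed.

Lemma eq_pref {x y : nat -> bool} : x =1 y -> pref x =1 pref y.
Proof. by move=> xy m; apply: eq_mkseq. Qed.

Lemma prefS (v : nat -> bool) m : pref v m.+1 = rcons (pref v m) (v m).
Proof. exact: mkseqS. Qed.

Lemma pref_shiftw (v : nat -> bool) m : pref v m.+1 = v 0 :: pref (shiftw v) m.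
Proof. exact: mkseqSl. Qed.

Lemma pref_take (v : nat -> bool) a b : a <= b -> pref v a = take a (pref v b).
Proof.
move=> ab; apply: (@eq_from_nth _ false); first by rewrite size_takel ?size_pref.
by move=> i; rewrite size_pref => ia; rewrite nth_take // !nth_mkseq //; lia.
Qed.

Lemma prefix_pref {z v} : prefix_of z v -> z = pref v (size z).
Proof.
move=> zv; apply: (@eq_from_nth _ false); first by rewrite size_pref.
by move=> i iz; rewrite nth_mkseq // zv.
Qed.

Lemma prefix_ofE z v : prefix_of z v <-> occurs_at v z 0.
Proof. by []. Qed.

Lemma occurs_cons v b r i :
  occurs_at v (b :: r) i <-> v i = b /\ occurs_at v r i.+1.
Proof.
split=> [occ | [vi occ] [|j] /= jr]; last 2 first.
- by rewrite addn0.
- by rewrite occ // addSnnS.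
split; first by rewrite -[i]addn0 -(occ 0).
by move=> j jr; rewrite addSnnS; apply: (occ j.+1).
Qed.

Lemma occurs_cat v x y i :
  occurs_at v (x ++ y) i <-> occurs_at v x i /\ occurs_at v y (i + size x).
Proof.
elim: x i => [|b x IH] i /=; first by rewrite addn0; split=> // -[].
by rewrite !occurs_cons IH addSnnS; tauto.
Qed.

Lemma eq_occurs v v' x i : v =1 v' -> occurs_at v x i -> occurs_at v' x i.
Proof. by move=> vv' occ j jx; rewrite -vv' occ. Qed.

Lemma occurs_inj {v x y i} :
  occurs_at v x i -> occurs_at v y i -> size x = size y -> x = y.
Proof.
move=> occx occy xy; apply: (@eq_from_nth _ false) => // j jx.
by rewrite occx // occy // -xy.
Qed.

Lemma occurs_at1 v z : occurs_at v z 1 <-> prefix_of z (shiftw v).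
Proof. by split=> occ j jz; rewrite occ // /shiftw add1n. Qed.

Lemma occurs_fin_at {u y z i k} : occurs_at u y i -> k + size z <= size y ->
  occurs_fin y z k <-> occurs_at u z (i + k).
Proof.
move=> occy kzy; split=> [[_ zy] j jz | occz]; last split=> // j jz.
  by rewrite zy // occy ?addnA //; lia.
by rewrite occz // occy ?addnA //; lia.
Qed.

Lemma eq_is_image f x x' v v' : x =1 x' -> v =1 v' ->
  is_image f x v -> is_image f x' v'.
Proof.
by move=> xx' vv' img m j; rewrite -(eq_pref xx') -vv'; apply: img.
Qed.

Lemma is_image_comp {f g x y z} : is_image f y z -> is_image g x y -> is_image (f \o g) x z.
Proof. by move=> fyz gxy m; rewrite /= (prefix_pref (gxy m)); apply: fyz. Qed.

Definition image_of (f : seq bool -> seq bool) (u : nat -> bool) : nat -> bool :=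
  fun i => nth false (f (pref u i.+1)) i.

Lemma eq_image_of f f' u : f =1 f' -> image_of f u =1 image_of f' u.
Proof. by move=> ff' i; rewrite /image_of ff'. Qed.

Section ImageOf.
Context {f : seq bool -> seq bool} {u : nat -> bool}.
Hypothesis f_cat : forall x y, f (x ++ y) = f x ++ f y.
Hypothesis f_size : forall x, size x <= size (f x).

Lemma nth_image_pref {m m' i} : m <= m' -> i < size (f (pref u m)) ->
  nth false (f (pref u m')) i = nth false (f (pref u m)) i.
Proof.
move=> mm' im; rewrite -(cat_take_drop m (pref u m')) -pref_take //.
by rewrite f_cat nth_cat im.
Qed.

Lemma size_image_pref i : i < size (f (pref u i.+1)).
Proof. by rewrite (leq_trans _ (f_size _)) ?size_pref. Qed.

Lemma image_of_image : is_image f u (image_of f u).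
Proof.
move=> m i im; rewrite /image_of.
rewrite -(nth_image_pref (leq_maxl m i.+1) im).
by rewrite (nth_image_pref (leq_maxr m i.+1) (size_image_pref i)).
Qed.

Lemma image_of_fixed : is_fixed_point f u -> image_of f u =1 u.
Proof. by move=> u_fix i; apply: u_fix; exact: size_image_pref. Qed.

End ImageOf.

Lemma image_of_comp f g u :
  (forall x y, f (x ++ y) = f x ++ f y) -> (forall x, size x <= size (f x)) ->
  (forall x y, g (x ++ y) = g x ++ g y) -> (forall x, size x <= size (g x)) ->
  is_image g (image_of f u) (image_of (fun x => g (f x)) u).
Proof.
move=> f_cat f_size g_cat g_size m; set z := f (pref u m).
have mz : m <= size z by rewrite (leq_trans _ (f_size _)) ?size_pref.
have -> : pref (image_of f u) m = take m z.
  by rewrite (pref_take _ _ _ mz) -(prefix_pref (image_of_image f_cat f_size m)).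
have gf_size x : size x <= size (g (f x)) by rewrite (leq_trans (f_size x)).
have gf_cat x y : g (f (x ++ y)) = g (f x) ++ g (f y) by rewrite f_cat g_cat.
have := image_of_image (f := fun x => g (f x)) (u := u) gf_cat gf_size m.
by rewrite /= -/z -{1}(cat_take_drop m z) g_cat prefix_ofE occurs_cat => -[].
Qed.

Definition offset (g : bool -> seq bool) (x : nat -> bool) m := size (morph g (pref x m)).

Section Offsets.
Context {g : bool -> seq bool} {x : nat -> bool}.
Local Notation offset := (offset g x).

Lemma offset0 : offset 0 = 0.
Proof. by []. Qed.

Lemma offsetS m : offset m.+1 = offset m + size (g (x m)).
Proof. by rewrite /offset prefS morph_rcons size_cat. Qed.

Lemma offsetD X m : occurs_at x X m ->
  offset (m + size X) = offset m + size (morph g X).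
Proof.
elim: X m => [|b X IH] m; first by rewrite !addn0.
rewrite occurs_cons morph_cons size_cat => -[xm occ].
by rewrite /= -addSnnS IH // offsetS xm addnA.
Qed.

Hypothesis g_nonerasing : forall b, 0 < size (g b).

Lemma offset_lt : {homo offset : m n / m < n}.
Proof. by apply: homo_ltn ltn_trans _ => m; rewrite offsetS -addn1 leq_add2l. Qed.

Lemma leq_offset : {mono offset : m n / m <= n}.
Proof. exact: leq_mono offset_lt. Qed.

Lemma ltn_offset : {mono offset : m n / m < n}.
Proof. by move=> m n; rewrite !ltnNge leq_offset. Qed.

Lemma offset_cover i : exists m k, k < size (g (x m)) /\ i = offset m + k.
Proof.
elim: i => [|i [m [k [km ->]]]]; first by exists 0, 0; rewrite addn0.
have [k1m | ] := ltnP k.+1 (size (g (x m))); first by exists m, k.+1; rewrite addnS.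
by exists m.+1, 0; rewrite offsetS; have := g_nonerasing (x m.+1); lia.
Qed.

Context {v : nat -> bool}.
Hypothesis x_image : is_image (morph g) x v.

Lemma occurs_offset m : occurs_at v (g (x m)) (offset m).
Proof.
by have := x_image m.+1; rewrite prefix_ofE prefS morph_rcons occurs_cat => -[].
Qed.

Lemma occurs_offset_morph X m : occurs_at x X m ->
  occurs_at v (morph g X) (offset m).
Proof.
elim: X m => [|b X IH] m //; rewrite occurs_cons morph_cons occurs_cat => -[xm occ].
by rewrite -xm -offsetS; split; [exact: occurs_offset | exact: IH].
Qed.

End Offsets.

(** * Desubstitution of φ_a and φ_α *)

Definition block (e b : bool) : seq bool := if b == e then [:: b] else [:: b; e].

(* [phie false] is φ_a and [phie true] is φ_α. *)
Definition phie (e : bool) : seq bool -> seq bool := morph (block e).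

Lemma size_block e b : size (block e b) = (b != e).+1.
Proof. by rewrite /block; case: eqP. Qed.

Lemma block_gt0 e b : 0 < size (block e b).
Proof. by rewrite size_block. Qed.

Lemma nth_block0 e b : nth false (block e b) 0 = b.
Proof. by rewrite /block; case: eqP. Qed.

Lemma nth_block_marker e b k : k < size (block e b) ->
  (nth false (block e b) k == e) = (k == (size (block e b)).-1).
Proof.
by case: k => [|[|k]]; rewrite /block; case: eqP => [-> | /eqP/negbTE be] //=; rewrite ?eqxx ?be.
Qed.

Lemma last_block e b : last e (block e b) = e.
Proof. by rewrite /block; case: eqP => [->|]. Qed.

Lemma last_phie e x : last e (phie e x) = e.
Proof. by elim: x => [|b x IH] //; rewrite /phie morph_cons last_cat last_block. Qed.

Lemma size_phie e x : size x <= size (phie e x).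
Proof. exact: size_morph_leq (block_gt0 e). Qed.

(* [desubst e] inverts [phie e] on factors starting at a block boundary; such a
   factor may end with a non-marker letter whose marker has been cut off. *)
Fixpoint desubst (e : bool) (q : seq bool) : seq bool :=
  if q is b :: r then
    if b == e then b :: desubst e r
    else if r is _ :: r' then b :: desubst e r' else [:: b]
  else [::].

Fixpoint admissible (e : bool) (q : seq bool) : bool :=
  if q is b :: r then
    if b == e then admissible e r
    else if r is b' :: r' then (b' == e) && admissible e r' else true
  else true.

Lemma desubst1 e b : desubst e [:: b] = [:: b].
Proof. by rewrite /=; case: (b == e). Qed.

Lemma desubst2 e b b' r : desubst e [:: b, b' & r] =
  if b == e then b :: desubst e (b' :: r) else b :: desubst e r.
Proof. by []. Qed.

Lemma admissible1 e b : admissible e [:: b].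
Proof. by rewrite /=; case: (b == e). Qed.

Lemma admissible2 e b b' r : admissible e [:: b, b' & r] =
  if b == e then admissible e (b' :: r) else (b' == e) && admissible e r.
Proof. by []. Qed.

Lemma size_desubst e q : size (desubst e q) <= size q.
Proof.
elim/seq_ind2: q => [|b|b b' r IHr IHb'r] //=; first by case: eqP.
by case: eqP => _; rewrite /= ltnS // ltnW.
Qed.

Lemma size_desubst_lt e b r : b != e -> r != [::] ->
  size (desubst e (b :: r)) < size (b :: r).
Proof.
move=> /negbTE be; case: r => [|b' r] // _.
by rewrite /= be /= !ltnS (leq_trans (size_desubst e r)).
Qed.

Lemma desubst_phie e x : desubst e (phie e x) = x.
Proof.
elim: x => [|b x IH] //; rewrite /phie morph_cons /block.
by case: eqP => [-> | /eqP/negbTE be] /=; rewrite ?eqxx ?be -/(phie e x) IH.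
Qed.

Lemma phie_inj e : injective (phie e).
Proof. by move=> x y xy; rewrite -(desubst_phie e x) xy desubst_phie. Qed.

Definition code (R0 R1 : seq bool) (b : bool) : seq bool := if b then R1 else R0.

(* [R0] and [R1] will be the two return words of a prefix and [d] its derived word. *)
Definition coded (v : nat -> bool) (s : nat) (q : seq bool) (R0 R1 : seq bool)
    (d : nat -> bool) : Prop :=
  (forall n, occurs_at v (morph (code R0 R1) (pref d n)) s) /\
  (forall i, s <= i -> occurs_at v q i <-> exists n, i = s + offset (code R0 R1) d n).

Lemma eq_coded {v v' s q R0 R1 d} : v =1 v' -> coded v s q R0 R1 d -> coded v' s q R0 R1 d.
Proof.
move=> vv' [img occ]; split=> [n | i si]; first exact: eq_occurs vv' (img n).
by rewrite -occ //; split; apply: eq_occurs => // k.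
Qed.

Definition proper_pair (R0 R1 : seq bool) : bool :=
  [&& R0 != R1, 0 < size R0 & 0 < size R1].

Lemma code_gt0 {R0 R1} : proper_pair R0 R1 -> forall b, 0 < size (code R0 R1 b).
Proof. by case/and3P=> _ R0_gt0 R1_gt0 []. Qed.

Lemma morph_code01 x : morph (code [:: false] [:: true]) x = x.
Proof. by elim: x => [|[] x IH] //; rewrite morph_cons IH. Qed.

Lemma proper_pair_phie e R0 R1 :
  proper_pair R0 R1 -> proper_pair (phie e R0) (phie e R1).
Proof.
case/and3P=> R01 R0_gt0 R1_gt0; apply/and3P; split.
- by apply: contra R01 => /eqP/phie_inj ->.
- exact: leq_trans R0_gt0 (size_phie e R0).
- exact: leq_trans R1_gt0 (size_phie e R1).
Qed.

Lemma proper_pair_conj e R0 R1 : proper_pair R0 R1 ->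
  proper_pair (belast e (phie e R0)) (belast e (phie e R1)).
Proof.
move=> /(proper_pair_phie e) /and3P [R01 R0_gt0 R1_gt0]; apply/and3P.
rewrite !size_belast; split => //; apply: contra R01 => /eqP eqR.
have [-> //] : e :: phie e R0 = e :: phie e R1 by rewrite !lastI !last_phie eqR.
Qed.

Section MarkerImage.
Context {e : bool} {x v : nat -> bool}.
Hypothesis x_image : is_image (phie e) x v.
Local Notation cut := (offset (block e) x).

Lemma cutS m : cut m.+1 = cut m + (x m != e).+1.
Proof. by rewrite offsetS size_block. Qed.

Lemma image_in_block m k : k < size (block e (x m)) ->
  v (cut m + k) = nth false (block e (x m)) k.
Proof. by move=> km; rewrite (occurs_offset x_image m k km). Qed.

Lemma image_at_cut m : v (cut m) = x m.
Proof. by rewrite -[cut m]addn0 image_in_block ?nth_block0 ?block_gt0. Qed.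

Lemma image_after_cut m : x m != e -> v (cut m).+1 = e.
Proof. by move=> xm; rewrite -addn1 image_in_block /block (negbTE xm) //. Qed.

Lemma cut_succP i : (exists m, cut m = i.+1) <-> v i = e.
Proof.
split=> [[[|m] cutm] | vi]; first by rewrite offset0 in cutm.
  have sz := block_gt0 e (x m).
  have -> : i = cut m + (size (block e (x m))).-1 by move: cutm; rewrite offsetS; lia.
  by apply/eqP; rewrite image_in_block ?nth_block_marker; lia.
have [m [k [km ik]]] := offset_cover (x := x) (block_gt0 e) i.
move: vi; rewrite ik image_in_block // => /eqP; rewrite nth_block_marker // => /eqP k_last.
by exists m.+1; rewrite offsetS; lia.
Qed.

Lemma image_next_marker i : v i != e -> v i.+1 = e.
Proof.
have [m [k [km ->]]] := offset_cover (x := x) (block_gt0 e) i.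
rewrite image_in_block // nth_block_marker //.
case: k km => [|[|k]]; rewrite size_block; case: (eqVneq (x m) e) => // xm _ _.
by rewrite addn0 image_after_cut.
Qed.

Lemma admissible_at_cut q m : occurs_at v q (cut m) -> admissible e q.
Proof.
elim/seq_ind2: q m => [|b|b b' r IHr IHb'r] m; rewrite ?admissible1 //.
rewrite admissible2 occurs_cons image_at_cut => -[<- occ].
case: eqP => [xm | /eqP xm].
  by apply: (IHb'r m.+1); rewrite cutS xm eqxx addn1.
move: occ; rewrite occurs_cons image_after_cut // => -[<-]; rewrite eqxx /= => occ.
by apply: (IHr m.+1); rewrite cutS xm addn2.
Qed.

Lemma occurs_desubst q m : admissible e q ->
  occurs_at v q (cut m) <-> occurs_at x (desubst e q) m.
Proof.
elim/seq_ind2: q m => [|b|b b' r IHr IHb'r] m //.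
  by move=> _; rewrite desubst1 !occurs_cons image_at_cut; split=> -[xm _].
rewrite admissible2 desubst2.
case: eqP => [be adm | /eqP be /andP [/eqP b'e adm]];
  rewrite (occurs_cons v) (occurs_cons x) image_at_cut;
  case: (eqVneq (x m) b) => [xm | /eqP xm]; try by split=> -[/xm].
- have -> : (cut m).+1 = cut m.+1 by rewrite cutS xm be eqxx addn1.
  exact: and_iff_compat_l (IHb'r _ adm).
- rewrite occurs_cons image_after_cut ?xm // b'e.
  have -> : (cut m).+2 = cut m.+1 by rewrite cutS xm be addn2.
  by split=> [[_ [_ /(IHr _ adm)]] | [_ /(IHr _ adm)]]; auto.
Qed.

Lemma leq_cut m n : (cut m <= cut n) = (m <= n).
Proof. exact: (leq_offset (x := x) (block_gt0 e) m n). Qed.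

Lemma coded_image {s q R0 R1 d} n : coded x s q R0 R1 d ->
  occurs_at v (phie e (morph (code R0 R1) (pref d n))) (cut s) /\
  cut (s + offset (code R0 R1) d n) = cut s + size (phie e (morph (code R0 R1) (pref d n))).
Proof.
move=> [img _]; split; first exact: occurs_offset_morph x_image _ _ (img n).
exact: offsetD (img n).
Qed.

Lemma coded_phie {s b r R0 R1 d} : cut s = s -> b != e -> admissible e (b :: r) ->
  coded x s (desubst e (b :: r)) R0 R1 d ->
  coded v s (b :: r) (phie e R0) (phie e R1) d.
Proof.
move=> cut_s be adm cd; have [_ occ] := cd.
have code_phie X : morph (code (phie e R0) (phie e R1)) X = phie e (morph (code R0 R1) X).
  by rewrite /phie morph_comp; apply: eq_morph => -[].
have off_cut n : s + offset (code (phie e R0) (phie e R1)) d n =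
                 cut (s + offset (code R0 R1) d n).
  by rewrite (coded_image n cd).2 cut_s /offset code_phie.
split=> [n | i si]; first by rewrite code_phie -cut_s; exact: (coded_image n cd).1.
split=> [occi | [n ->]]; last by rewrite off_cut occurs_desubst // occ ?leq_addr //; exists n.
have [m cutm] : exists m, cut m = i.
  case: i si occi => [|i] si occi; first by exists 0.
  apply/cut_succP; case: (eqVneq (v i) e) => // /image_next_marker vi1.
  by have := occi 0 isT; rewrite /= addn0 vi1 => b_e; rewrite b_e eqxx in be.
have sm : s <= m by rewrite -leq_cut cut_s cutm.
have [n mn] : exists n, m = s + offset (code R0 R1) d n.
  by apply/occ; rewrite // -occurs_desubst // cutm.
by exists n; rewrite -cutm mn off_cut.
Qed.

Lemma coded_phie_conj {s r R0 R1 d} : cut 1 = s.+1 -> admissible e r ->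
  coded x 1 (desubst e r) R0 R1 d ->
  coded v s (e :: r) (belast e (phie e R0)) (belast e (phie e R1)) d.
Proof.
move=> cut1_chain adm cd; have [_ occ] := cd.
set S0 := belast e (phie e R0); set S1 := belast e (phie e R1).
have conj X : morph (code S0 S1) X ++ [:: e] = e :: phie e (morph (code R0 R1) X).
  rewrite /phie morph_comp -morph_belast => [|b]; last by case: b; exact: last_phie.
  by congr (_ ++ _); apply: eq_morph => -[].
have size_conj X : size (morph (code S0 S1) X) = size (phie e (morph (code R0 R1) X)).
  by have /(congr1 size) := conj X; rewrite size_cat addn1 => -[].
have off_cut n : (s + offset (code S0 S1) d n).+1 = cut (1 + offset (code R0 R1) d n).
  by rewrite (coded_image n cd).2 cut1_chain /offset size_conj.
split=> [n | i si].
  have occ_n : occurs_at v (e :: phie e (morph (code R0 R1) (pref d n))) s.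
    apply/occurs_cons; split; first by apply/cut_succP; exists 1.
    by rewrite -cut1_chain; exact: (coded_image n cd).1.
  by move: occ_n; rewrite -conj => /occurs_cat [].
split=> [/occurs_cons [vi occr] | [n ->]].
  have [m cutm] := (cut_succP i).2 vi.
  have m_gt0 : 1 <= m by case: m cutm => [|m]; rewrite ?offset0.
  have [n mn] : exists n, m = 1 + offset (code R0 R1) d n.
    by apply/occ; rewrite // -occurs_desubst // cutm.
  by exists n; apply/succn_inj; rewrite off_cut -mn.
apply/occurs_cons; rewrite off_cut; split.
  by apply/cut_succP; exists (1 + offset (code R0 R1) d n).
by apply/occurs_desubst => //; apply/occ; [rewrite leq_addr | exists n].
Qed.

End MarkerImage.

(** * Return words and derived word of a coded prefix *)

Section DerivedWord.
Context {u : nat -> bool} {p R0 R1 : seq bool} {d : nat -> bool}.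
Hypothesis pR : proper_pair R0 R1.
Hypothesis cd : coded u 0 p R0 R1 d.
Hypothesis d_both : forall b, exists n, d n = b.
Local Notation o := (offset (code R0 R1) d).

Lemma occurs_pP i : occurs_at u p i <-> exists n, i = o n.
Proof. by rewrite cd.2 //; split=> -[n ->]; exists n. Qed.

Lemma occurs_return n : occurs_at u (code R0 R1 (d n) ++ p) (o n).
Proof.
apply/occurs_cat; split; first exact: occurs_offset cd.1 n.
by rewrite -offsetS; apply/occurs_pP; exists n.+1.
Qed.

Lemma return_code b : return_word u p (code R0 R1 b).
Proof.
have [n <-] := d_both b; have occ := occurs_return n.
have R_gt0 := code_gt0 pR (d n).
split; [by exists (o n) | split=> // k].
have o_n1 : o n.+1 = o n + size (code R0 R1 (d n)) by rewrite offsetS.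
split=> [occk | [-> | ->]].
- have k_le : k <= size (code R0 R1 (d n)) by case: occk; rewrite size_cat; lia.
  have [m om] := (occurs_pP _).1 ((occurs_fin_at occ occk.1).1 occk).
  have /andP [nm mn1] : n <= m <= n.+1.
    have le_o := leq_offset (x := d) (code_gt0 pR).
    by rewrite -(le_o n m) -(le_o m n.+1) -om o_n1 leq_addr leq_add2l.
  have [mE | mE] : m = n \/ m = n.+1 by lia.
  - by left; move: om; rewrite mE; lia.
  - by right; move: om; rewrite mE o_n1; lia.
- by apply/(occurs_fin_at occ); rewrite ?size_cat ?leq_addl // addn0; apply/occurs_pP; exists n.
- by apply/(occurs_fin_at occ); rewrite ?size_cat // -o_n1; apply/occurs_pP; exists n.+1.
Qed.

Lemma return_wordP x : return_word u p x <-> x = R0 \/ x = R1.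
Proof.
split=> [[[i occ] [x_gt0 only2]] | [-> | ->]]; last 2 first.
- exact: (return_code false).
- exact: (return_code true).
have /occurs_cat [occx occp] := occ.
have lt_o m m' : (o m < o m') = (m < m') := ltn_offset (x := d) (code_gt0 pR) m m'.
have [n i_on] : exists n, i = o n.
  apply/occurs_pP; rewrite -[i]addn0; apply/(occurs_fin_at occ).
    by rewrite size_cat leq_addl.
  by apply/only2; left.
have [n' i_on'] := (occurs_pP _).1 occp.
have nn' : n < n' by rewrite -lt_o -i_on -i_on'; lia.
have n'E : n' = n.+1.
  apply/eqP; rewrite eqn_leq nn' andbT; apply: contraT; rewrite -ltnNge => n1n'.
  have := lt_o n n.+1; have := lt_o n.+1 n'; rewrite ltnSn n1n' => lt1 lt2.
  have : occurs_fin (x ++ p) p (o n.+1 - i).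
    apply/(occurs_fin_at occ); first by rewrite size_cat; lia.
    by rewrite subnKC; [apply/occurs_pP; exists n.+1 | lia].
  by move/only2; lia.
have size_x : size x = size (code R0 R1 (d n)).
  by move: i_on'; rewrite n'E offsetS -i_on; lia.
rewrite i_on in occx; have -> := occurs_inj occx (occurs_offset cd.1 n) size_x.
by case: (d n); [right | left].
Qed.

Lemma derived_word_of_coded : is_derived_word u p (fun n => nat_of_bool (d n)).
Proof.
exists 1, (fun i => if i == 0 then R0 else R1); split.
  case/and3P: pR => R01 _ _ [|[|i]] [|[|j]] // _ _ /= eqR; by rewrite eqR eqxx in R01.
split=> [x | ].
  rewrite return_wordP; split=> [[-> | ->] | [[|[|i]] // _ <-]].
  - by exists 0.
  - by exists 1.
  - by left.
  - by right.
split=> [n | ]; first by case: (d n).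
exists 0; split=> [| n]; first by split=> //; apply/occurs_pP; exists 0.
have -> : flatten [seq (if nat_of_bool (d j) == 0 then R0 else R1) | j <- iota 0 n] =
          morph (code R0 R1) (pref d n).
  by rewrite /morph /pref /mkseq -map_comp; congr flatten; apply: eq_map => j /=; case: (d j).
exact: cd.1.
Qed.

End DerivedWord.

Definition marker (l : lett) : bool := if l is Lalpha then true else false.

Lemma phi_letter_block {l} : in_a_alpha l -> phi_letter l =1 block (marker l).
Proof. by case: l => // _ []. Qed.

Lemma has_marker {w} b : all in_a_alpha w -> primitive_w w -> has (fun l => marker l == b) w.
Proof.
move=> w_aa [k [_ w_prim]]; apply: contraT => no_b.
have fix_nb : phiw w [:: ~~ b] = [:: ~~ b].
  elim: w w_aa no_b {w_prim} => [|l w IH] //= /andP [l_aa w_aa].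
  rewrite negb_or => /andP [lb no_b]; rewrite IH // /morph /= cats0 phi_letter_block // /block.
  by move: lb {IH no_b}; case: b; case: (marker l).
by have := w_prim (~~ b) b; rewrite iter_fix // mem_seq1; case: b {no_b fix_nb}.
Qed.

Definition conj_letter (c e : bool) : lett :=
  match c, e with
  | false, false => La | false, true => Lbeta
  | true, false => Lb | true, true => Lalpha
  end.

Lemma conj_letter_marker c l : in_a_alpha l ->
  conj_letter c (marker l) = if c then H_letter l else F_letter l.
Proof. by case: c; case: l. Qed.

Lemma phi_conj_letter_eq e : phi_letter (conj_letter e e) =1 block e.
Proof. by case: e => -[]. Qed.

Lemma phi_conj_letter_neq {c e} : c != e ->
  phi_letter (conj_letter c e) =1 (fun b => belast e (block e b)).
Proof. by case: c; case: e => // _ []. Qed.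

(* Dropping the first letter c of φ_e(c x) leaves φ_e(x) if c = e, and
   e φ_e(x) = φ'(x) e otherwise, with φ' the conjugate of φ_e by e. *)
Lemma image_shiftw e x v : is_image (phie e) x v ->
  is_image (morph (phi_letter (conj_letter (x 0) e))) (shiftw x) (shiftw v).
Proof.
move=> img m; apply/occurs_at1.
have /occurs_cat [occ0 occ] : occurs_at v (block e (x 0) ++ phie e (pref (shiftw x) m)) 0.
  by rewrite -morph_cons -pref_shiftw; apply: img.
rewrite size_block add0n in occ.
case: (eqVneq (x 0) e) occ0 occ => [-> | xe] occ0 occ.
  by rewrite (eq_morph _ _ (phi_conj_letter_eq e)).
rewrite (eq_morph _ _ (phi_conj_letter_neq xe)).
have v1 : v 1 = e by have := occ0 1; rewrite /block (negbTE xe) add0n /= => /(_ isT) <-.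
have : occurs_at v (e :: phie e (pref (shiftw x) m)) 1 by apply/occurs_cons.
by rewrite /phie -(morph_belast _ _ _ (last_block e)) => /occurs_cat [].
Qed.

(** * Desubstitution chains *)

Lemma chain_first_letter {V : nat -> nat -> bool} {E : nat -> bool} :
  (forall j, is_image (phie (E j)) (V j.+1) (V j)) -> forall j, V j 0 = V 0 0.
Proof.
move=> V_image; elim=> [|j IH] //; rewrite -IH.
by have := image_at_cut (V_image j) 0; rewrite offset0.
Qed.

Definition coded_in (V : nat -> nat -> bool) j s q := exists j' R0 R1,
  proper_pair R0 R1 /\ coded (V j) s q R0 R1 (shiftw (V j')).

(* The trivial coding of the empty word reads [shiftw (V j)], hence starts at 1. *)
Definition anchored (V : nat -> nat -> bool) j s q :=
  [/\ s <= 1, occurs_at (V j) q s & (q = [::] -> s = 1)].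

Section Chain.
Context {V : nat -> nat -> bool} {E : nat -> bool} {c : bool}.
Hypothesis V_image : forall j, is_image (phie (E j)) (V j.+1) (V j).
Hypothesis V0 : forall j, V j 0 = c.

Lemma shifted_chain_image j k :
  is_image (phiw (mkseq (fun i => conj_letter c (E (j + i))) k))
    (shiftw (V (j + k))) (shiftw (V j)).
Proof.
elim: k => [|k IH]; first by move=> m i; rewrite addn0 size_pref => im; rewrite nth_mkseq.
have step := image_shiftw _ _ _ (V_image (j + k)); rewrite V0 -addnS in step.
by move=> m; rewrite mkseqS phiw_rcons; exact: (is_image_comp IH step m).
Qed.

Lemma chain_second_marker j : E j != c -> V j 1 = E j.
Proof.
move=> Ejc; have := image_after_cut (V_image j) 0; rewrite V0 offset0; apply.
by rewrite eq_sym.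
Qed.

Hypothesis E_recurrent : forall j b, exists k, E (j + k) = b.

Lemma chain_second_letter j : V j 1 = ~~ c.
Proof.
have [k] := E_recurrent j (~~ c); elim: k j => [|k IH] j Ek.
all: case: (eqVneq (E j) c) => [Ec | Ejc];
  last by rewrite chain_second_marker //; move: Ejc; case: (E j); case: c.
- by move: Ek; rewrite addn0 Ec; case: c.
- have := image_at_cut (V_image j) 1; rewrite cutS offset0 V0 Ec eqxx => ->.
  by apply: IH; rewrite -addSnnS in Ek.
Qed.

Lemma chain_third_letter j : E j = c -> V j 2 = c.
Proof.
move=> Ec; have := image_after_cut (V_image j) 1.
by rewrite cutS offset0 V0 chain_second_letter Ec eqxx /=; case: c => /(_ isT).
Qed.

Lemma chain_has_first_letter j : exists n, V j n.+1 = c.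
Proof.
have [k] := E_recurrent j c; elim: k j => [|k IH] j Ek.
all: case: (eqVneq (E j) c) => [Ec | Ejc]; first by exists 1; apply: chain_third_letter.
  by move: Ejc; rewrite -Ek addn0 eqxx.
have [n Vn] : exists n, V j.+1 n.+1 = c by apply: IH; rewrite addSnnS.
have cut_gt0 : 0 < offset (block (E j)) (V j.+1) n.+1 by rewrite offsetS size_block addnS.
by exists (offset (block (E j)) (V j.+1) n.+1).-1; rewrite prednK // image_at_cut.
Qed.

Lemma chain_shiftw_surj j b : exists n, shiftw (V j) n = b.
Proof.
case: (eqVneq b c) => [-> | bc]; first exact: chain_has_first_letter.
by exists 0; rewrite /shiftw chain_second_letter; move: bc; case: b; case: c.
Qed.

Lemma coded_in_nil j : coded_in V j 1 [::].
Proof.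
exists j, [:: false], [:: true]; split=> //; split=> [n | i i_gt0].
  by rewrite morph_code01; apply/occurs_at1 => k; rewrite size_pref => kn; rewrite nth_mkseq.
by split=> // _; exists i.-1; rewrite /offset morph_code01 size_pref; lia.
Qed.

Lemma cut1_chain j : offset (block (E j)) (V j.+1) 1 = (c != E j).+1.
Proof. by rewrite cutS offset0 V0. Qed.

Lemma coded_in_desubst {j s b r} : anchored V j s (b :: r) -> b != E j ->
  anchored V j.+1 s (desubst (E j) (b :: r)) /\
  (coded_in V j.+1 s (desubst (E j) (b :: r)) -> coded_in V j s (b :: r)).
Proof.
move=> [s_le1 occ _] bE.
have cut_s : offset (block (E j)) (V j.+1) s = s.
  case: s s_le1 occ => [|[|]] // _ occ; rewrite cut1_chain.
  by move: bE (occ 0 isT); rewrite /= addn0 chain_second_letter => /[swap] ->; case: c; case: (E j).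
have adm : admissible (E j) (b :: r) by apply: (admissible_at_cut (V_image j) _ s); rewrite cut_s.
split.
  split=> //; first by apply/(occurs_desubst (V_image j) _ _ adm); rewrite cut_s.
  by case: r {occ adm} => [|b' r]; rewrite ?desubst1 ?desubst2; [|case: eqP].
move=> [j' [R0 [R1 [pR cd]]]]; exists j', (phie (E j) R0), (phie (E j) R1).
by split; [exact: proper_pair_phie | exact: (coded_phie (V_image j) cut_s bE adm cd)].
Qed.

Lemma coded_in_desubst_conj {j s r} : anchored V j s (E j :: r) ->
  anchored V j.+1 1 (desubst (E j) r) /\
  (coded_in V j.+1 1 (desubst (E j) r) -> coded_in V j s (E j :: r)).
Proof.
move=> [s_le1 /occurs_cons [vs occ] _].
have cut1_s : offset (block (E j)) (V j.+1) 1 = s.+1.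
  rewrite cut1_chain; case: s s_le1 vs occ => [|[|]] // _;
    by rewrite ?V0 ?chain_second_letter => <- _; case: c.
have adm : admissible (E j) r by apply: (admissible_at_cut (V_image j) _ 1); rewrite cut1_s.
split; first by split=> //; apply/(occurs_desubst (V_image j) _ _ adm); rewrite cut1_s.
move=> [j' [R0 [R1 [pR cd]]]].
exists j', (belast (E j) (phie (E j) R0)), (belast (E j) (phie (E j) R1)).
by split; [exact: proper_pair_conj | exact: (coded_phie_conj (V_image j) cut1_s adm cd)].
Qed.

(* A lone non-marker letter is left unchanged by desubstitution: induct on the
   distance to the next step where it is the marker. *)
Lemma coded_in_letter j s b : anchored V j s [:: b] -> coded_in V j s [:: b].
Proof.
have [k] := E_recurrent j b; elim: k j => [|k IH] j Ek;
  case: (eqVneq b (E j)) => [-> | bE] anch;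
  try by apply: (coded_in_desubst_conj anch).2; exact: coded_in_nil.
  by move: bE; rewrite -Ek addn0 eqxx.
have [anch' step] := coded_in_desubst anch bE; rewrite desubst1 in anch' step.
by apply/step/IH; rewrite // addSnnS.
Qed.

Lemma coded_in_anchored {j s q} : anchored V j s q -> coded_in V j s q.
Proof.
have [N] := ubnP (size q); elim: N j s q => // N IH j s [|b r] q_lt anch.
  by have [_ _ /(_ erefl) ->] := anch; exact: coded_in_nil.
rewrite ltnS in q_lt.
case: (eqVneq b (E j)) anch => [-> | bE] anch.
  have [anch' step] := coded_in_desubst_conj anch; apply/step/IH/anch'.
  exact: leq_ltn_trans (size_desubst _ _) q_lt.
case: r q_lt anch => [|b' r] q_lt anch; first exact: coded_in_letter.
have [anch' step] := coded_in_desubst anch bE; apply/step/IH/anch'.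
exact: leq_trans (size_desubst_lt _ _ (b' :: r) bE isT) q_lt.
Qed.

End Chain.

(** * The chain of a fixed point of φ_w *)

Definition chain_word (w : seq lett) (u : nat -> bool) j :=
  image_of (phiw (drop (j %% size w) w)) u.

Definition chain_marker (w : seq lett) j := marker (nth La w (j %% size w)).

Section FixedPointChain.
Context {w : seq lett} {u : nat -> bool}.
Hypothesis w_aa : all in_a_alpha w.
Hypothesis w_prim : primitive_w w.
Hypothesis u_fix : is_fixed_point (phiw w) u.
Local Notation chain_word := (chain_word w u).
Local Notation chain_marker := (chain_marker w).

Lemma size_word_gt0 : 0 < size w.
Proof. by have := has_marker false w_aa w_prim; case: w. Qed.

Lemma chain_word0 : chain_word 0 =1 u.
Proof. by rewrite /chain_word mod0n drop0; exact: image_of_fixed (size_phiw w) u_fix. Qed.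

Lemma chain_word_image j :
  is_image (phie (chain_marker j)) (chain_word j.+1) (chain_word j).
Proof.
have jw := ltn_pmod j size_word_gt0.
have l_aa : in_a_alpha (nth La w (j %% size w)) by apply: (all_nthP La w_aa).
set l := nth La w (j %% size w); set ws := drop (j %% size w).+1 w.
have next : image_of (phiw ws) u =1 chain_word j.+1.
  rewrite /chain_word modnSE ?size_word_gt0 //; case: eqP => [full | _] // i.
  rewrite drop0 (image_of_fixed (size_phiw w) u_fix) /ws full drop_size.
  by rewrite /image_of /= nth_mkseq.
have cur : image_of (fun x => phie (marker l) (phiw ws x)) u =1 chain_word j.
  move=> i; rewrite /chain_word (drop_nth La jw) -/l -/ws.
  by apply: eq_image_of => x; rewrite /= (eq_morph _ _ (phi_letter_block l_aa)).
apply: eq_is_image next cur _; apply: image_of_comp.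
- exact: phiw_cat.
- exact: size_phiw.
- exact: morph_cat.
- exact: size_phie.
Qed.

Lemma chain_marker_recurrent j b : exists k, chain_marker (j + k) = b.
Proof.
have /(has_nthP La) [i iw /eqP li] := has_marker b w_aa w_prim.
by have [k jk] := modnD_surj j iw; exists k; rewrite /chain_marker jk.
Qed.

Lemma chain_word_period j : chain_word (j + size w) = chain_word j.
Proof. by rewrite /chain_word modnDr. Qed.

Lemma chain_conj_cyc c j :
  mkseq (fun i => conj_letter c (chain_marker (j + i))) (size w) =
  iter j (@cyc lett) (if c then Hw w else Fw w).
Proof.
have size_cw : size (if c then Hw w else Fw w) = size w by case: c; rewrite size_map.
rewrite (iter_cyc La) size_cw; apply: eq_mkseq => i.
have ji := ltn_pmod (j + i) size_word_gt0.
rewrite /chain_marker conj_letter_marker; last exact: (all_nthP La w_aa).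
by case: c {size_cw}; rewrite (nth_map La).
Qed.

End FixedPointChain.

Theorem corollary31 (w : seq lett) (u : nat -> bool) (p : seq bool) :
  all in_a_alpha w ->
  primitive_w w ->
  is_fixed_point (phiw w) u ->
  p != [::] ->
  prefix_of p u ->
  exists (d : nat -> bool) (sigma : seq bool -> seq bool),
    is_derived_word u p (fun n => nat_of_bool (d n)) /\
    (in_C (Fw w) sigma \/ in_C (Hw w) sigma) /\
    is_fixed_point sigma d.
Proof.
move=> w_aa w_prim u_fix p_nil pu.
have V_image := chain_word_image w_aa w_prim u_fix.
have E_rec := chain_marker_recurrent w_aa w_prim.
have V0 j : chain_word w u j 0 = u 0 by rewrite (chain_first_letter V_image) chain_word0.
have anch : anchored (chain_word w u) 0 0 p.
  split=> //; first by apply: eq_occurs pu => i; rewrite chain_word0.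
  by move=> p0; rewrite p0 in p_nil.
have [j [R0 [R1 [pR cd]]]] := coded_in_anchored V_image V0 E_rec anch.
exists (shiftw (chain_word w u j)), (phiw (iter j (@cyc lett) (if u 0 then Hw w else Fw w))).
split; [|split].
- apply: derived_word_of_coded pR _ (chain_shiftw_surj V_image V0 E_rec j).
  exact: eq_coded (chain_word0 u_fix) cd.
- by case: (u 0); [right | left]; exists j.
- rewrite -chain_conj_cyc //; have := shifted_chain_image V_image V0 j (size w).
  by rewrite chain_word_period.
Qed.
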